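(* Let $f:\mathbb{R}\to\mathbb{R}$ be a bounded Abel continuous function. Then $f$ is linear, i.e. there exist $a,b\in\mathbb{R}$ with $f(t)=at+b$ for all $t\in\mathbb{R}$.
   Context: A sequence $(p_n)$ is Abel convergent to $\ell$ if $\sum_{k=0}^{\infty}p_k x^k$ converges for every $0\le x<1$ and $\lim_{x\to 1^-}(1-x)\sum_{k=0}^{\infty}p_k x^k=\ell$. $f$ is Abel continuous if $(f(p_n))$ is Abel convergent to $f(\ell)$ whenever $(p_n)$ is Abel convergent to $\ell$. ''Linear'' here is used in the sense of a function of the form $t\mapsto at+b$. *)

From Stdlib Require Import Reals.
From Coquelicot Require Import Coquelicot.
Open Scope R_scope.

Definition abel_convergent (p : nat -> R) (l : R) : Prop :=
  (forall x : R, 0 <= x < 1 -> ex_series (fun k => p k * x ^ k)) /\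
  filterlim (fun x : R => (1 - x) * Series (fun k => p k * x ^ k))
    (at_left 1) (locally l).

Definition abel_continuous (f : R -> R) : Prop :=
  forall (p : nat -> R) (l : R),
    abel_convergent p l -> abel_convergent (fun n => f (p n)) (f l).

From Stdlib Require Import Reals Lra FunctionalExtensionality.
From Coquelicot Require Import Coquelicot.
Open Scope R_scope.

(* The sequence c + d (-1)^k, alternating between c + d and c - d, has Abel
   limit c; its image under f alternates between f (c + d) and f (c - d) and
   so has Abel limit their mean.  Abel continuity thus gives f c = that mean.  A function satisfying this midpoint identity is affine along every
   arithmetic progression, and boundedness forces every such slope to vanish,
   so f is constant. *)

Lemma pow_neg1_cases (k : nat) : (-1) ^ k = 1 \/ (-1) ^ k = -1.
Proof.
  induction k as [|k [H|H]]; simpl; [left | right | left]; try rewrite H; lra.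
Qed.

Lemma is_series_alternating (c d x : R) : 0 <= x < 1 ->
  is_series (fun k => (c + d * (-1) ^ k) * x ^ k) (c / (1 - x) + d / (1 + x)).
Proof.
  intros Hx.
  apply is_series_ext with (fun k => c * x ^ k + d * (-x) ^ k).
  { intros k. change (c * x ^ k + d * (- x) ^ k = (c + d * (-1) ^ k) * x ^ k).
    replace (- x) with (-1 * x) by ring. rewrite Rpow_mult_distr. ring. }
  apply (is_series_plus (V := R_NormedModule)).
  - replace (c / (1 - x)) with (scal c (/ (1 - x)))
      by (unfold scal; simpl; unfold mult; simpl; field; lra).
    apply (is_series_scal_l (K := R_AbsRing) (V := R_NormedModule)), is_series_geom.
    rewrite Rabs_pos_eq; lra.
  - replace (d / (1 + x)) with (scal d (/ (1 - - x)))
      by (unfold scal; simpl; unfold mult; simpl; field; lra).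
    apply (is_series_scal_l (K := R_AbsRing) (V := R_NormedModule)), is_series_geom.
    rewrite Rabs_Ropp, Rabs_pos_eq; lra.
Qed.

Lemma abel_convergent_alternating (c d : R) :
  abel_convergent (fun k => c + d * (-1) ^ k) c.
Proof.
  split.
  - intros x Hx. eexists. exact (is_series_alternating c d x Hx).
  - apply filterlim_ext_loc with (fun x => c + d * ((1 - x) / (1 + x))).
    { exists (mkposreal 1 Rlt_0_1). intros y Hy Hy1.
      unfold ball in Hy; simpl in Hy; unfold AbsRing_ball, abs, minus, plus, opp in Hy; simpl in Hy.
      apply Rabs_lt_between in Hy.
      rewrite (is_series_unique _ _ (is_series_alternating c d y ltac:(lra))).
      field. lra. }
    apply (filterlim_filter_le_1 (F := locally 1)); [apply filter_le_within|].
    assert (Hcont : continuous (fun x => c + d * ((1 - x) / (1 + x))) 1).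
    { apply (ex_derive_continuous (K := R_AbsRing) (V := R_NormedModule)).
      auto_derive. lra. }
    unfold continuous in Hcont.
    replace (c + d * ((1 - 1) / (1 + 1))) with c in Hcont by field.
    exact Hcont.
Qed.

Lemma abel_convergent_unique (p : nat -> R) (l l' : R) :
  abel_convergent p l -> abel_convergent p l' -> l = l'.
Proof.
  intros [_ Hl] [_ Hl']. exact (filterlim_locally_unique _ _ _ Hl Hl').
Qed.

Lemma abel_continuous_midpoint (f : R -> R) : abel_continuous f ->
  forall c d, f c = (f (c + d) + f (c - d)) / 2.
Proof.
  intros Hf c d.
  set (c' := (f (c + d) + f (c - d)) / 2).
  set (d' := (f (c + d) - f (c - d)) / 2).
  assert (Himage : (fun k => f (c + d * (-1) ^ k)) = (fun k => c' + d' * (-1) ^ k)).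
  { apply functional_extensionality. intros k.
    destruct (pow_neg1_cases k) as [H|H]; rewrite H; unfold c', d';
      [replace (c + d * 1) with (c + d) by ring
      |replace (c + d * -1) with (c - d) by ring]; field. }
  apply (abel_convergent_unique (fun k => c' + d' * (-1) ^ k)).
  - rewrite <- Himage. exact (Hf _ _ (abel_convergent_alternating c d)).
  - exact (abel_convergent_alternating c' d').
Qed.

Section MidpointAffine.

Variable f : R -> R.
Hypothesis f_midpoint : forall c d, f c = (f (c + d) + f (c - d)) / 2.

Lemma midpoint_affine_progression (x d : R) (n : nat) :
  f (x + INR n * d) = f x + INR n * (f (x + d) - f x).
Proof.
  enough (H : f (x + INR n * d) = f x + INR n * (f (x + d) - f x) /\
              f (x + INR (S n) * d) = f x + INR (S n) * (f (x + d) - f x))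
    by exact (proj1 H).
  induction n as [|n [IHn IHSn]].
  - simpl. rewrite Rmult_0_l, Rmult_1_l, Rplus_0_r. split; ring.
  - split; [exact IHSn|].
    assert (Hmid := f_midpoint (x + INR (S n) * d) d).
    rewrite !S_INR in *.
    replace (x + (INR n + 1) * d - d) with (x + INR n * d) in Hmid by ring.
    replace (x + (INR n + 1 + 1) * d) with (x + (INR n + 1) * d + d) by ring.
    lra.
Qed.

Lemma bounded_midpoint_constant (M : R) :
  (forall t, Rabs (f t) <= M) -> forall x y, f y = f x.
Proof.
  intros HM x y.
  set (D := f (x + (y - x)) - f x).
  destruct (Req_dec D 0) as [HD0|HD0].
  { unfold D in HD0. replace (x + (y - x)) with y in HD0 by ring. lra. }
  exfalso.
  destruct (INR_archimed (Rabs D) (2 * M) (Rabs_pos_lt _ HD0)) as [n Hn].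
  assert (Hprog := midpoint_affine_progression x (y - x) n).
  fold D in Hprog.
  assert (Hdiff : Rabs (INR n * D) <= 2 * M).
  { replace (INR n * D) with (f (x + INR n * (y - x)) + - f x) by lra.
    eapply Rle_trans; [apply Rabs_triang|]. rewrite Rabs_Ropp.
    assert (Hfar := HM (x + INR n * (y - x))). assert (Hx := HM x). lra. }
  rewrite Rabs_mult, (Rabs_pos_eq _ (pos_INR n)) in Hdiff. lra.
Qed.

End MidpointAffine.

Theorem corollary7 (f : R -> R) :
  (exists M : R, forall t : R, Rabs (f t) <= M) ->
  abel_continuous f ->
  exists a b : R, forall t : R, f t = a * t + b.
Proof.
  intros [M HM] Hf.
  assert (Hconst := bounded_midpoint_constant f (abel_continuous_midpoint f Hf) M HM).
  exists 0, (f 0). intros t. rewrite (Hconst 0 t). ring.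
Qed.
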